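(* Let $G$ be a profinite-$C$ group, let $H$ be a closed subgroup of $G$ and let $N$ be a closed normal subgroup of $G$. Then: (i) If $S$ is a closed subgroup of $G$ with $G=HS$, then $S$ contains a closed permutable complement of $H$ in $G$. (ii) If $S$ is a closed subgroup of $G$ containing $N$ such that $S/N$ is a closed permutable complement of $HN/N$ in $G/N$, then there exists a closed permutable complement $K$ of $H$ in $G$ such that $S=KN$.
   Context: A permutable complement of a subgroup $H$ of a group $G$ is a subgroup $K$ with $G=HK$ and $H\cap K=1$. A profinite group $G$ is a profinite-$C$ group if every closed subgroup of $G$ has a closed permutable complement in $G$. *)

From HB Require Import structures.
From mathcomp Require Import all_boot monoid.
From mathcomp Require Import all_classical topology.

Set Implicit Arguments.
Unset Strict Implicit.
Unset Printing Implicit Defensive.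

Local Open Scope classical_set_scope.
Local Open Scope group_scope.

HB.mixin Record isTopologicalGroup G of Group G & Topological G := {
  mulg_continuous : continuous (fun p : G * G => p.1 * p.2) ;
  invg_continuous : continuous (fun x : G => x^-1) ;
}.

#[short(type="topologicalGroupType")]
HB.structure Definition TopologicalGroup :=
  {G of Group G & Topological G & isTopologicalGroup G}.

Definition profinite (G : topologicalGroupType) : Prop :=
  [/\ compact [set: G], hausdorff_space G & totally_disconnected [set: G]].

Section Subgroups.
Variable G : groupType.

Definition is_subgroup (H : set G) : Prop :=
  [/\ H 1, (forall x y, H x -> H y -> H (x * y)) & (forall x, H x -> H x^-1)].

Definition is_normal (N : set G) : Prop :=
  is_subgroup N /\ (forall g x, N x -> N (x ^ g)).

Definition setmul (H K : set G) : set G :=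
  [set x | exists h, exists k, [/\ H h, K k & x = h * k]].

Definition perm_complement (H K : set G) : Prop :=
  setmul H K = [set: G] /\ H `&` K = [set 1].

Definition group_hom (Q : groupType) (f : G -> Q) : Prop :=
  forall x y, f (x * y) = f x * f y.
End Subgroups.

Definition closed_subgroup (G : topologicalGroupType) (H : set G) : Prop :=
  closed H /\ is_subgroup H.

Definition closed_perm_complement (G : topologicalGroupType) (H K : set G) :=
  closed_subgroup K /\ perm_complement H K.

Definition profinite_C (G : topologicalGroupType) : Prop :=
  profinite G /\
  forall H : set G, closed_subgroup H -> exists K, closed_perm_complement H K.

(* The topological quotient G/N, up to isomorphism: pi : G -> Q is a continuous,
   open, surjective group homomorphism with kernel N. *)
Definition quotient_map (G Q : topologicalGroupType) (N : set G) (pi : G -> Q) :=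
  [/\ group_hom pi, continuous pi, (forall U : set G, open U -> open (pi @` U)),
      pi @` [set: G] = [set: Q] & pi @^-1` [set 1] = N].

From HB Require Import structures.
From mathcomp Require Import all_boot monoid.
From mathcomp Require Import all_classical topology.

(* For (i), take a closed complement K of H ∩ S; by Dedekind's rule
   S = (H ∩ S)(K ∩ S), so G = HS = H(K ∩ S), and K ∩ S is a complement of H
   inside S.  For (ii), G/N = (HN/N)(S/N) with N <= S gives G = HS, and
   HN/N ∩ S/N = 1 gives H ∩ S <= N; if K <= S is the complement from (i),
   every x in S is written x = k h with k in K and h in H ∩ S <= N. *)

Local Open Scope classical_set_scope.
Local Open Scope group_scope.

Section Subgroups.
Set Implicit Arguments.
Variable G : groupType.
Implicit Types H K N S : set G.

Lemma subgroupI H K : is_subgroup H -> is_subgroup K -> is_subgroup (H `&` K).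
Proof.
move=> [H1 HM HV] [K1 KM KV]; split => //.
- by move=> x y [? ?] [? ?]; split; [apply: HM | apply: KM].
- by move=> x [? ?]; split; [apply: HV | apply: KV].
Qed.

Lemma perm_complementIr H S K :
  is_subgroup H -> is_subgroup S -> setmul H S = [set: G] ->
  perm_complement (H `&` S) K -> perm_complement H (K `&` S).
Proof.
move=> [_ HM _] [_ SM SV] HS [HSK HSKI]; split; last first.
  by rewrite (setIC K) setIA.
apply/seteqP; split => // g _.
have [h [s [hH sS ->]]] : setmul H S g by rewrite HS.
have [l [k [[lH lS] kK s_lk]]] : setmul (H `&` S) K s by rewrite HSK.
have kS : S k by rewrite -[k](mulKg l) -s_lk; apply: SM => //; apply: SV.
by exists (h * l), k; split; [apply: HM | | rewrite s_lk mulgA].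
Qed.

Lemma setmul_complement_sub H K N S :
  is_subgroup H -> is_subgroup K -> is_subgroup S ->
  setmul H K = [set: G] -> K `<=` S -> N `<=` S -> H `&` S `<=` N ->
  S = setmul K N.
Proof.
move=> [_ _ HV] [_ _ KV] [_ SM _] HK KS NS HSN; apply/seteqP; split => x.
- move=> xS; have [h [k [hH kK xV]]] : setmul H K x^-1 by rewrite HK.
  have x_kh : x = k^-1 * h^-1 by rewrite -invgM -xV invgK.
  have hVN : N h^-1.
    apply: HSN; split; first exact: HV.
    have -> : h^-1 = k * x by rewrite x_kh mulVKg.
    by apply: SM => //; apply: KS.
  by exists k^-1, h^-1; split => //; apply: KV.
- by move=> [k [n [kK nN ->]]]; apply: SM; [apply: KS | apply: NS].
Qed.

Section Homomorphism.
Variables (Q : groupType) (pi : G -> Q).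
Hypothesis pi_hom : group_hom pi.

Lemma group_hom1 : pi 1 = 1.
Proof. by apply: (@mulgI _ (pi 1)); rewrite -pi_hom !mulg1. Qed.

Lemma group_homV x : pi x^-1 = (pi x)^-1.
Proof. by apply: (@mulIg _ (pi x)); rewrite -pi_hom !mulVg group_hom1. Qed.

Lemma image_setmul_kernel H N :
  N 1 -> N `<=` pi @^-1` [set 1] -> pi @` setmul H N = pi @` H.
Proof.
move=> N1 Nker; apply/seteqP; split => y.
- move=> [x [h [n [hH /Nker pin1 ->]]] <-].
  by exists h => //; rewrite pi_hom pin1 mulg1.
- by move=> [h hH <-]; exists (h * 1); [exists h, 1 | rewrite mulg1].
Qed.

Lemma setmul_eq_setT_of_image H S :
  is_subgroup S -> pi @^-1` [set 1] `<=` S ->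
  setmul (pi @` H) (pi @` S) = [set: Q] -> setmul H S = [set: G].
Proof.
move=> [_ SM _] kerS HS; apply/seteqP; split => // g _.
have [_ [_ [[h hH <-] [s sS <-] pig]]] : setmul (pi @` H) (pi @` S) (pi g).
  by rewrite HS.
have mS : S ((h * s)^-1 * g).
  by apply: kerS; rewrite /= pi_hom group_homV pi_hom pig mulVg.
by exists h, (s * ((h * s)^-1 * g)); split => //; [apply: SM | rewrite mulgA mulVKg].
Qed.

Lemma setI_sub_kernel H S :
  pi @` H `&` pi @` S = [set 1] -> H `&` S `<=` pi @^-1` [set 1].
Proof.
move=> HSI x [xH xS].
have : (pi @` H `&` pi @` S) (pi x) by split; exists x.
by rewrite HSI.
Qed.

End Homomorphism.
End Subgroups.

Lemma closed_perm_complement_sub (G : topologicalGroupType) (H S : set G) :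
  (forall A : set G, closed_subgroup A -> exists K, closed_perm_complement A K) ->
  closed_subgroup H -> closed_subgroup S -> setmul H S = [set: G] ->
  exists2 K, closed_perm_complement H K & K `<=` S.
Proof.
move=> complemented [Hc Hs] [Sc Ss] HS.
have [K [[Kc Ks] HK]] := complemented _ (conj (closedI Hc Sc) (subgroupI Hs Ss)).
exists (K `&` S); last by move=> x [].
split; first by split; [exact: closedI | exact: subgroupI].
exact: perm_complementIr.
Qed.

Theorem lemma2p2 (G : topologicalGroupType) (H N : set G) :
  profinite_C G -> closed_subgroup H -> closed N -> is_normal N ->
  (* (i) *)
  (forall S : set G, closed_subgroup S -> setmul H S = [set: G] ->
     exists K, closed_perm_complement H K /\ K `<=` S) /\
  (* (ii) *)
  (forall (Q : topologicalGroupType) (pi : G -> Q) (S : set G),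
     quotient_map N pi -> closed_subgroup S -> N `<=` S ->
     closed_perm_complement (pi @` setmul H N) (pi @` S) ->
     exists K, closed_perm_complement H K /\ S = setmul K N).
Proof.
move=> [_ complemented] hH _ [[N1 _ _] _].
split=> [S hS HS | Q pi S [pi_hom _ _ _ kerN] hS NS [_ [HNS HNSI]]].
  by have [K ? ?] := closed_perm_complement_sub complemented hH hS HS; exists K.
have Nker : N `<=` pi @^-1` [set 1] by rewrite kerN.
rewrite !(image_setmul_kernel pi_hom _ N1 Nker) in HNS HNSI.
have HS : setmul H S = [set: G].
  by apply: (setmul_eq_setT_of_image pi_hom hS.2 _ HNS); rewrite kerN.
have HSN : H `&` S `<=` N by rewrite -kerN; exact: setI_sub_kernel HNSI.
have [K hK KS] := closed_perm_complement_sub complemented hH hS HS.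
exists K; split => //.
have [[_ Ks] [HK _]] := hK.
exact: setmul_complement_sub hH.2 Ks hS.2 HK KS NS HSN.
Qed.
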